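(* Let $n\ge2$, $M$ a nonderogatory $d\times d$ matrix with minimal polynomial $\mathbf p$, and $\mathcal B$ a generic maximal subalgebra of $\mathcal T_{n,d}[\mathcal P(M)]$, with $\mathbf s_+,\mathbf s_-$ as defined below. Let $A\in\mathcal B$ and polynomials $\tilde{\mathbf a}_j$, each relatively prime to $\mathbf p$, satisfy $A_j=\mathbf s_+(M)\tilde{\mathbf a}_j(M)$ for $j\ge1$ and $A_j=\mathbf s_-(M)\tilde{\mathbf a}_j(M)$ for $j\le-1$; let $\boldsymbol\gamma_1\in\mathbb C[X]$ be such that $\mathbf p$ divides $\boldsymbol\gamma_1\tilde{\mathbf a}_{1-n}-1$, and put $\boldsymbol\xi=\tilde{\mathbf a}_1\boldsymbol\gamma_1$. Then $\mathcal B=\mathfrak B(\mathbf s_+,\mathbf s_-,\boldsymbol\xi)$.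
   Context: A nonderogatory matrix is one whose minimal polynomial equals its characteristic polynomial; $\mathcal P(M)$ is the algebra of polynomials in $M$; $\mathcal T_{n,d}[\mathcal P(M)]$ is the set of $n\times n$ block Toeplitz matrices $(B_{i-j})_{i,j=0}^{n-1}$ with all $B_m\in\mathcal P(M)$. A maximal subalgebra of $\mathcal T_{n,d}[\mathcal P(M)]$ is a subalgebra contained in it, maximal under inclusion; it is generic if it is contained neither in the set of such matrices with $B_i=0$ for all $i\ge1$ nor in the set with $B_i=0$ for all $i\le-1$. For $B\in\mathcal B$ write $B_j=\mathbf b_j(M)$; $\mathbf s_+$ is the greatest common divisor of $\mathbf p$ and all $\mathbf b_j$ with $j\ge1$, $B\in\mathcal B$, and $\mathbf s_-$ that of $\mathbf p$ and all $\mathbf b_j$ with $j\le-1$, $B\in\mathcal B$ (one has $\mathbf s_+\mathbf s_-\mid\mathbf p$, and such an $A$ exists). For $\mathbf p_+,\mathbf p_-,\boldsymbol\chi$ with $\mathbf p_+\mathbf p_-\mid\mathbf p$ and $\boldsymbol\chi$ coprime to $\mathbf p$, and $\mathbf q=\mathbf p/(\mathbf p_+\mathbf p_-)$, $\mathfrak B(\mathbf p_+,\mathbf p_-,\boldsymbol\chi)$ is the set of block Toeplitz matrices $A=(A_{i-j})$ with all $A_i\in\mathcal P(M)$ such that for each $i=1,\dots,n-1$ there are polynomials $\mathbf a_i,\mathbf a_{i-n}$ with $A_i=\mathbf p_+(M)\mathbf a_i(M)$, $A_{i-n}=\mathbf p_-(M)\mathbf a_{i-n}(M)$ and $\mathbf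 q\mid\mathbf a_i-\boldsymbol\chi\mathbf a_{i-n}$. *)

From HB Require Import structures.
From mathcomp Require Import all_boot all_order all_algebra.
Set Implicit Arguments. Unset Strict Implicit. Unset Printing Implicit Defensive.
Import Order.TTheory GRing.Theory Num.Theory.
Local Open Scope ring_scope.

(* Entry (r, c) of an N x N matrix, given by natural-number indices;
   0 when out of range. *)
Definition mxget (R : zmodType) (N : nat) (A : 'M[R]_N) (r c : nat) : R :=
  match (insub r : option 'I_N), (insub c : option 'I_N) with
  | Some i, Some j => A i j
  | _, _ => 0
  end.

Definition blk (R : zmodType) (n d : nat) (A : 'M[R]_(n * d)) (i j : nat)
  : 'M[R]_d :=
  \matrix_(k < d, l < d) mxget A (i * d + k)%N (j * d + l)%N.

Definition block_toeplitz (R : zmodType) (n d : nat) (A : 'M[R]_(n * d)) :=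
  forall i j i' j' : nat, (i < n)%N -> (j < n)%N -> (i' < n)%N -> (j' < n)%N ->
    (i%:Z - j%:Z = i'%:Z - j'%:Z) -> blk A i j = blk A i' j'.

(* The Toeplitz coefficient B_m (m : int) of A = (B_{i-j}). *)
Definition tcoef (R : zmodType) (n d : nat) (A : 'M[R]_(n * d)) (m : int)
  : 'M[R]_d :=
  match m with
  | Posz k => blk A k 0
  | Negz k => blk A 0 k.+1
  end.

Section Toep.
Variables (C : numClosedFieldType) (n d : nat) (M : 'M[C]_d.+1).
Local Notation N := (n * d.+1)%N.
Local Notation mxset := ('M[C]_N -> Prop).

Definition inPM (X : 'M[C]_d.+1) := exists q : {poly C}, X = horner_mx M q.

Definition nonderogatory := mxminpoly M = char_poly M.

Definition Tnd (A : 'M[C]_N) :=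
  block_toeplitz A /\
  (forall i j : nat, (i < n)%N -> (j < n)%N -> inPM (blk A i j)).

Definition subalgebra (S : mxset) :=
  [/\ S 0, (forall X Y, S X -> S Y -> S (X + Y)),
      (forall (c : C) X, S X -> S (c *: X)) &
      (forall X Y, S X -> S Y -> S (X *m Y))].

Definition maximal_subalgebra (S : mxset) :=
  [/\ subalgebra S, (forall X, S X -> Tnd X) &
      (forall S' : mxset, subalgebra S' -> (forall X, S' X -> Tnd X) ->
         (forall X, S X -> S' X) -> forall X, S' X -> S X)].

Definition generic_subalg (S : mxset) :=
  ~ (forall X, S X -> forall i : nat, (0 < i)%N -> tcoef X i%:Z = 0) /\
  ~ (forall X, S X -> forall i : nat, (0 < i)%N -> tcoef X (- i%:Z) = 0).

Definition gcd_coefs (S : mxset) (sgn : bool) (s : {poly C}) :=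
  let rel g := g %| mxminpoly M /\
     (forall X (j : nat) (b : {poly C}), S X -> (0 < j < n)%N ->
        tcoef X (if sgn then j%:Z else - j%:Z) = horner_mx M b -> g %| b) in
  [/\ s \is monic, rel s & forall g, rel g -> g %| s].

Definition frakB (pp pm chi : {poly C}) (A : 'M[C]_N) :=
  let q := mxminpoly M %/ (pp * pm) in
  Tnd A /\
  forall i : nat, (1 <= i < n)%N ->
    exists ai aim : {poly C},
      [/\ tcoef A i%:Z = horner_mx M pp * horner_mx M ai,
          tcoef A (i%:Z - n%:Z) = horner_mx M pm * horner_mx M aim &
          q %| ai - chi * aim].

End Toep.

From HB Require Import structures.
From mathcomp Require Import all_boot all_order all_algebra.
From mathcomp Require Import zify ring.
From Stdlib Require Import ClassicalEpsilon.
Set Implicit Arguments. Unset Strict Implicit. Unset Printing Implicit Defensive.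
Import Order.TTheory GRing.Theory Num.Theory.
Local Open Scope ring_scope.

(* The blocks of a matrix X in T_{n,d}[P(M)] are given by a symbol
   f : int -> {poly C}, with block (i, j) equal to f(i - j)(M), so everything
   reduces to divisibility modulo p = mxminpoly M.  The product X Y of two
   such matrices is block Toeplitz exactly when the symbols satisfy the cross
   relation p | x_a y_(b-n) - x_(a-n) y_b for 1 <= a, b < n; this relation
   holds for any two elements of frakB(p+, p-, chi), so frakB is a subalgebra
   of T_{n,d}[P(M)] as soon as p+ p- | p.  Applying the cross relation to A Y
   for Y in B and inverting a~_(1-n) modulo p with gamma_1 shows that B is
   contained in frakB(s+, s-, xi), hence equal to it by maximality.  The
   divisibility s+ s- | p needed on the way comes from the same argument run
   with gcd(s+, p/s-) in place of s+. *)

Section BlockEntries.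
Variables (R : zmodType) (N : nat).
Implicit Types A B : 'M[R]_N.

Lemma mxget_ord A (r c : 'I_N) : mxget A r c = A r c.
Proof. by rewrite /mxget !valK. Qed.

Lemma mxget0 r c : mxget (0 : 'M[R]_N) r c = 0.
Proof.
by rewrite /mxget; case: (insub r : option 'I_N) => [i|];
  case: (insub c : option 'I_N) => [j|]; rewrite ?mxE.
Qed.

Lemma mxgetD A B r c : mxget (A + B) r c = mxget A r c + mxget B r c.
Proof.
by rewrite /mxget; case: (insub r : option 'I_N) => [i|];
  case: (insub c : option 'I_N) => [j|]; rewrite ?mxE ?addr0.
Qed.

End BlockEntries.

Lemma mxgetZ (R : pzRingType) N (a : R) (A : 'M[R]_N) r c :
  mxget (a *: A) r c = a * mxget A r c.
Proof.
by rewrite /mxget; case: (insub r : option 'I_N) => [i|];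
  case: (insub c : option 'I_N) => [j|]; rewrite ?mxE ?mulr0.
Qed.

Lemma sum_nat_mul (V : nmodType) n D (F : nat -> V) :
  \sum_(0 <= t < n * D) F t = \sum_(0 <= k < n) \sum_(0 <= l < D) F (k * D + l)%N.
Proof.
rewrite big_nat_mul; apply: eq_big_nat => k _.
rewrite -[X in \sum_(X <= _ < _) _]add0n big_addn mulSn addnK.
by apply: eq_big_nat => l _; rewrite addnC.
Qed.

Section Blocks.
Variables (R : zmodType) (n D : nat).
Implicit Types A B : 'M[R]_(n * D).

Lemma blk0 i j : blk (0 : 'M[R]_(n * D)) i j = 0.
Proof. by apply/matrixP => k l; rewrite !mxE mxget0. Qed.

Lemma blkD A B i j : blk (A + B) i j = blk A i j + blk B i j.
Proof. by apply/matrixP => k l; rewrite !mxE mxgetD. Qed.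

Lemma toeplitz_blk_tcoef A i j :
  block_toeplitz A -> (i < n)%N -> (j < n)%N -> blk A i j = tcoef A (i%:Z - j%:Z).
Proof.
move=> toeA lt_in lt_jn; case: (leqP j i) => le_ji.
  by rewrite subzn //=; apply: toeA => //; lia.
have -> : i%:Z - j%:Z = Negz (j - i.+1) by rewrite NegzE; lia.
by apply: toeA => //; lia.
Qed.

End Blocks.

Lemma blkZ (R : pzRingType) n D (a : R) (A : 'M[R]_(n * D)) i j :
  blk (a *: A) i j = a *: blk A i j.
Proof. by apply/matrixP => k l; rewrite !mxE mxgetZ. Qed.

Lemma blkM (R : pzRingType) n D (A B : 'M[R]_(n * D)) i j : (i < n)%N -> (j < n)%N ->
  blk (A *m B) i j = \sum_(k < n) blk A i k *m blk B k j.
Proof.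
move=> lt_in lt_jn; apply/matrixP => k l.
have lt_r : (i * D + k < n * D)%N by have := ltn_ord k; nia.
have lt_c : (j * D + l < n * D)%N by have := ltn_ord l; nia.
rewrite !mxE (mxget_ord (A *m B) (Ordinal lt_r) (Ordinal lt_c)) mxE summxE.
transitivity (\sum_(0 <= t < n * D) mxget A (i * D + k) t * mxget B t (j * D + l)).
  by rewrite big_mkord; apply: eq_bigr => t _; rewrite -!mxget_ord.
rewrite sum_nat_mul big_mkord; apply: eq_bigr => m _.
by rewrite mxE big_mkord; apply: eq_bigr => t _; rewrite !mxE.
Qed.

Lemma horner_mx_eqP (F : fieldType) d (M : 'M[F]_d.+1) (f g : {poly F}) :
  reflect (horner_mx M f = horner_mx M g) (mxminpoly M %| f - g).
Proof. by rewrite dvd_mxminpoly rmorphB subr_eq0; apply: eqP. Qed.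

Lemma dvdp_sum (R : idomainType) (p : {poly R}) n (G : 'I_n -> {poly R}) :
  (forall k, p %| G k) -> p %| \sum_(k < n) G k.
Proof. by move=> pG; apply: (big_ind (fun x => p %| x)) => //; apply: dvdp_add. Qed.

Section ToeplitzSymbols.
Variables (C : numClosedFieldType) (d : nat) (M : 'M[C]_d.+1).
Local Notation p := (mxminpoly M).
Implicit Types (n : nat) (f fx fy : int -> {poly C}) (pp pm chi : {poly C}).

Definition symbol_of n (X : 'M[C]_(n * d.+1)) f := forall i j : nat,
  (i < n)%N -> (j < n)%N -> blk X i j = horner_mx M (f (i%:Z - j%:Z)).

Lemma Tnd_symbolP n (X : 'M[C]_(n * d.+1)) : Tnd M X <-> exists f, symbol_of X f.
Proof.
split=> [[toeX inPX] | [f fX]]; last first.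
  split=> [i j i' j' ? ? ? ? eq_ij | i j ? ?]; first by rewrite !fX // eq_ij.
  by exists (f (i%:Z - j%:Z)); apply: fX.
pose coef m := epsilon (inhabits 0) (fun q => tcoef X m = horner_mx M q).
exists coef => i j lt_in lt_jn; rewrite (toeplitz_blk_tcoef toeX) //.
apply: (epsilon_spec (inhabits 0) (fun q => tcoef X (i%:Z - j%:Z) = horner_mx M q)).
by have [q eq_q] := inPX i j lt_in lt_jn; exists q; rewrite -toeplitz_blk_tcoef.
Qed.

Lemma tcoef_symbol n (X : 'M[C]_(n * d.+1)) f (m : int) :
  symbol_of X f -> (- n%:Z < m < n%:Z)%R -> tcoef X m = horner_mx M (f m).
Proof.
move=> fX; case: m => k /= /andP[]; first by move=> *; rewrite fX ?subr0 //; lia.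
by rewrite !NegzE => *; rewrite fX ?sub0r //; lia.
Qed.

(* The last condition is [q %| a_i - chi * a_(i-n)] of [frakB] multiplied by [pp * pm]. *)
Definition frakB_symbol n pp pm chi f := forall i : nat, (1 <= i < n)%N ->
  [/\ pp %| f i%:Z, pm %| f (i%:Z - n%:Z) &
      p %| pm * f i%:Z - chi * pp * f (i%:Z - n%:Z)].

Lemma frakB_symbolP n (X : 'M[C]_(n * d.+1)) pp pm chi f :
  pp * pm %| p -> symbol_of X f ->
  frakB M pp pm chi X <-> frakB_symbol n pp pm chi f.
Proof.
move=> dvd_p fX; have p_neq0 : p != 0 by apply/monic_neq0/mxminpoly_monic.
have ppm_neq0 : pp * pm != 0 by apply: contra p_neq0 => /eqP ppm0; rewrite -dvd0p -ppm0.
have p_eq : p = p %/ (pp * pm) * (pp * pm) by rewrite divpK.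
have pp_p : pp %| p := dvdp_trans (dvdp_mulr pm (dvdpp pp)) dvd_p.
have pm_p : pm %| p := dvdp_trans (dvdp_mull pp (dvdpp pm)) dvd_p.
have tcoefX i : (1 <= i < n)%N ->
    tcoef X i%:Z = horner_mx M (f i%:Z) /\
    tcoef X (i%:Z - n%:Z) = horner_mx M (f (i%:Z - n%:Z)).
  by move=> lt_in; split; apply: tcoef_symbol fX _; lia.
split=> [[_ frakX] i lt_in | f_B].
  have [a_i [a_in [eq_i eq_in q_a]]] := frakX i lt_in; have [tX_i tX_in] := tcoefX i lt_in.
  rewrite tX_i -rmorphM in eq_i; rewrite tX_in -rmorphM in eq_in.
  move/horner_mx_eqP: eq_i => p_i; move/horner_mx_eqP: eq_in => p_in.
  have pp_f : pp %| f i%:Z.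
    rewrite -(subrK (pp * a_i) (f i%:Z)).
    exact: dvdp_add (dvdp_trans pp_p p_i) (dvdp_mulr _ (dvdpp _)).
  have pm_f : pm %| f (i%:Z - n%:Z).
    rewrite -(subrK (pm * a_in) (f _)).
    exact: dvdp_add (dvdp_trans pm_p p_in) (dvdp_mulr _ (dvdpp _)).
  split=> //; rewrite -[_ - _](subrK ((a_i - chi * a_in) * (pp * pm))).
  apply: dvdp_add; last by rewrite p_eq dvdp_mul.
  have -> : pm * f i%:Z - chi * pp * f (i%:Z - n%:Z) - (a_i - chi * a_in) * (pp * pm) =
    pm * (f i%:Z - pp * a_i) - chi * pp * (f (i%:Z - n%:Z) - pm * a_in) by ring.
  by apply: dvdp_sub; apply: dvdp_mull.
split; first by apply/Tnd_symbolP; exists f.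
move=> i lt_in; have [pp_f pm_f p_f] := f_B i lt_in; have [-> ->] := tcoefX i lt_in.
exists (f i%:Z %/ pp), (f (i%:Z - n%:Z) %/ pm).
split; [by rewrite -rmorphM mulrC divpK | by rewrite -rmorphM mulrC divpK |].
rewrite -(dvdp_mul2r _ _ ppm_neq0) -p_eq.
have -> : (f i%:Z %/ pp - chi * (f (i%:Z - n%:Z) %/ pm)) * (pp * pm) =
  pm * (f i%:Z %/ pp * pp) - chi * pp * (f (i%:Z - n%:Z) %/ pm * pm) by ring.
by rewrite !divpK.
Qed.

Definition blk_conv n fx fy (i j : nat) :=
  \sum_(k < n) fx (i%:Z - k%:Z) * fy (k%:Z - j%:Z).

Lemma blkM_symbol n (X Y : 'M[C]_(n * d.+1)) fx fy i j :
  symbol_of X fx -> symbol_of Y fy -> (i < n)%N -> (j < n)%N ->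
  blk (X *m Y) i j = horner_mx M (blk_conv n fx fy i j).
Proof.
move=> fX fY lt_in lt_jn; rewrite blkM // rmorph_sum.
by apply: eq_bigr => k _; rewrite rmorphM fX // fY.
Qed.

Lemma blk_conv_shift n fx fy i j :
  blk_conv n fx fy i.+1 j.+1 - blk_conv n fx fy i j
    = fx i.+1%:Z * fy (- j.+1%:Z) - fx (i.+1%:Z - n%:Z) * fy (n%:Z - j.+1%:Z).
Proof.
rewrite /blk_conv; case: n => [|n]; first by rewrite !big_ord0 subrr subr0 sub0r subrr.
rewrite big_ord_recl big_ord_recr /= subr0 sub0r.
have -> : \sum_(k < n) fx (i.+1%:Z - (bump 0 k)%:Z) * fy ((bump 0 k)%:Z - j.+1%:Z)
    = \sum_(k < n) fx (i%:Z - k%:Z) * fy (k%:Z - j%:Z).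
  by apply: eq_bigr => k _; congr (fx _ * fy _); rewrite /bump /=; lia.
have -> : i.+1%:Z - n.+1%:Z = i%:Z - n%:Z by lia.
have -> : n.+1%:Z - j.+1%:Z = n%:Z - j%:Z by lia.
by set s := \sum_(_ < n) _; ring.
Qed.

(* By [symbol_of_mul] and [toeplitz_mul_cross], this is exactly when the product
   of matrices with symbols [fx] and [fy] is again block Toeplitz. *)
Definition cross_compatible n fx fy := forall a b : nat,
  (1 <= a < n)%N -> (1 <= b < n)%N ->
  p %| fx a%:Z * fy (b%:Z - n%:Z) - fx (a%:Z - n%:Z) * fy b%:Z.

Lemma horner_blk_conv_shift n fx fy i j :
  cross_compatible n fx fy -> (i.+1 < n)%N -> (j.+1 < n)%N ->
  horner_mx M (blk_conv n fx fy i.+1 j.+1) = horner_mx M (blk_conv n fx fy i j).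
Proof.
move=> cross lt_in lt_jn; apply/horner_mx_eqP.
rewrite blk_conv_shift.
have := cross i.+1 (n - j.+1)%N ltac:(lia) ltac:(lia).
have -> : (n - j.+1)%N%:Z - n%:Z = - j.+1%:Z by lia.
by have -> : (n - j.+1)%N%:Z = n%:Z - j.+1%:Z by lia.
Qed.

Lemma horner_blk_conv_diag n fx fy i j t :
  cross_compatible n fx fy -> (i + t < n)%N -> (j + t < n)%N ->
  horner_mx M (blk_conv n fx fy (i + t) (j + t)) = horner_mx M (blk_conv n fx fy i j).
Proof.
move=> cross; elim: t => [|t IH] lt_in lt_jn; first by rewrite !addn0.
by rewrite !addnS horner_blk_conv_shift ?IH //; lia.
Qed.

Definition symbol_mul n fx fy (m : int) :=
  match m with Posz k => blk_conv n fx fy k 0 | Negz k => blk_conv n fx fy 0 k.+1 end.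

Lemma symbol_of_mul n (X Y : 'M[C]_(n * d.+1)) fx fy :
  symbol_of X fx -> symbol_of Y fy -> cross_compatible n fx fy ->
  symbol_of (X *m Y) (symbol_mul n fx fy).
Proof.
move=> fX fY cross i j lt_in lt_jn; rewrite (blkM_symbol fX fY) //.
case: (leqP j i) => [le_ji | lt_ij].
  by rewrite subzn //= -(horner_blk_conv_diag (i := i - j) (j := 0) (t := j) cross) ?subnK.
have -> : i%:Z - j%:Z = Negz (j - i.+1) by rewrite NegzE; lia.
have eq_j : ((j - i.+1).+1 + i = j)%N by lia.
by rewrite /= -(horner_blk_conv_diag (i := 0) (t := i) cross) ?add0n ?eq_j.
Qed.

Lemma toeplitz_mul_cross n (X Y : 'M[C]_(n * d.+1)) fx fy :
  symbol_of X fx -> symbol_of Y fy -> block_toeplitz (X *m Y) ->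
  cross_compatible n fx fy.
Proof.
move=> fX fY toeXY [|i] b // /andP[_ lt_in] /andP[b_gt0 lt_bn].
have [j eq_j] : exists j, (n - b = j.+1)%N by exists (n - b).-1; lia.
have := toeXY i.+1 j.+1 i j ltac:(lia) ltac:(lia) ltac:(lia) ltac:(lia) ltac:(lia).
rewrite ?(blkM_symbol fX fY); try lia.
move/horner_mx_eqP; rewrite blk_conv_shift.
have -> : n%:Z - j.+1%:Z = b%:Z by lia.
by have -> : - j.+1%:Z = b%:Z - n%:Z by lia.
Qed.

Lemma frakB_symbol_cross n pp pm chi fx fy :
  frakB_symbol n pp pm chi fx -> frakB_symbol n pp pm chi fy -> cross_compatible n fx fy.
Proof.
move=> fx_B fy_B a b lt_an lt_bn.
have [/dvdpP[u ->] /dvdpP[u' ->] p_x] := fx_B a lt_an.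
have [/dvdpP[v ->] /dvdpP[v' ->] p_y] := fy_B b lt_bn.
have -> : u * pp * (v' * pm) - u' * pm * (v * pp) =
    v' * (pm * (u * pp) - chi * pp * (u' * pm)) - u' * (pm * (v * pp) - chi * pp * (v' * pm)).
  by ring.
by apply: dvdp_sub; apply: dvdp_mull.
Qed.

Lemma symbol_mul_subn n fx fy (i : nat) :
  (i < n)%N -> symbol_mul n fx fy (i%:Z - n%:Z) = blk_conv n fx fy 0 (n - i).
Proof.
move=> lt_in; have -> : i%:Z - n%:Z = Negz (n - i.+1) by rewrite NegzE; lia.
by rewrite /= subnSK.
Qed.

Lemma frakB_symbol_mul n pp pm chi fx fy :
  frakB_symbol n pp pm chi fx -> frakB_symbol n pp pm chi fy ->
  frakB_symbol n pp pm chi (symbol_mul n fx fy).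
Proof.
move=> fx_B fy_B i /andP[i_gt0 lt_in]; have n_gt0 : (0 < n)%N by lia.
rewrite /= symbol_mul_subn //; split.
- apply: dvdp_sum => k; have lt_kn := ltn_ord k.
  rewrite subr0; have [-> | k_gt0] := posnP k.
    by rewrite subr0; apply: dvdp_mulr; case: (fx_B i) => //; lia.
  by apply: dvdp_mull; case: (fy_B k) => //; lia.
- apply: dvdp_sum => k; have lt_kn := ltn_ord k.
  have [-> | k_gt0] := posnP k.
    rewrite (_ : 0%:Z - (n - i)%N%:Z = i%:Z - n%:Z); last by lia.
    by apply: dvdp_mull; case: (fy_B i) => //; lia.
  rewrite (_ : 0%:Z - _ = (n - k)%N%:Z - n%:Z); last by lia.
  by apply: dvdp_mulr; case: (fx_B (n - k)%N) => //; lia.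
pose rot (k : 'I_n) : 'I_n := Ordinal (ltn_pmod (k + i) n_gt0).
have rot_inj : injective rot.
  move=> k k' /(congr1 val) /= /eqP; rewrite eqn_modDr !modn_small // => /eqP.
  exact: val_inj.
rewrite /blk_conv (reindex_inj rot_inj) !mulr_sumr -sumrB; apply: dvdp_sum => k /=.
have lt_kn := ltn_ord k; have [lt_kin | le_nki] := ltnP (k + i) n.
- rewrite modn_small // subr0.
  have -> : i%:Z - (k + i)%N%:Z = - k%:Z by lia.
  have -> : k%:Z - (n - i)%N%:Z = (k + i)%N%:Z - n%:Z by lia.
  rewrite sub0r; set u := fx _; set v := fy _; set w := fy _.
  rewrite (_ : _ - _ = u * (pm * v - chi * pp * w)); last by ring.
  by apply: dvdp_mull; case: (fy_B (k + i)%N) => //; lia.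
have -> : ((k + i) %% n = k + i - n)%N.
  by rewrite -{1}(subnK le_nki) modnDr modn_small //; lia.
have -> : i%:Z - (k + i - n)%N%:Z = (n - k)%N%:Z by lia.
have -> : 0%:Z - k%:Z = (n - k)%N%:Z - n%:Z by lia.
have -> : k%:Z - (n - i)%N%:Z = (k + i - n)%N%:Z - 0%:Z by lia.
set u := fx _; set v := fy _; set w := fx _.
rewrite (_ : _ - _ = v * (pm * u - chi * pp * w)); last by ring.
by apply: dvdp_mull; case: (fx_B (n - k)%N) => //; lia.
Qed.

Lemma frakB_symbolE n (X : 'M[C]_(n * d.+1)) pp pm chi :
  pp * pm %| p ->
  frakB M pp pm chi X <-> exists2 f, symbol_of X f & frakB_symbol n pp pm chi f.
Proof.
move=> dvd_p; split=> [frakX | [f fX f_B]]; last exact/(frakB_symbolP _ dvd_p fX).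
have [f fX] := (Tnd_symbolP X).1 frakX.1.
by exists f => //; apply/(frakB_symbolP _ dvd_p fX).
Qed.

Lemma frakB_subalgebra n pp pm chi :
  pp * pm %| p -> subalgebra (frakB (n := n) M pp pm chi).
Proof.
move=> dvd_p.
have symbolE X : frakB M pp pm chi X <-> _ := frakB_symbolE X chi dvd_p.
split.
- apply/symbolE; exists (fun=> 0) => [i j _ _ | i _].
    by rewrite blk0 rmorph0.
  by rewrite !dvdp0 !mulr0 subrr dvdp0.
- move=> X Y /symbolE[fx fX fx_B] /symbolE[fy fY fy_B].
  apply/symbolE; exists (fun m => fx m + fy m) => [i j lt_in lt_jn | i lt_in].
    by rewrite blkD fX // fY // rmorphD.
  have [pp_x pm_x p_x] := fx_B i lt_in; have [pp_y pm_y p_y] := fy_B i lt_in.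
  split; try exact: dvdp_add.
  have -> : pm * (fx i%:Z + fy i%:Z) - chi * pp * (fx (i%:Z - n%:Z) + fy (i%:Z - n%:Z))
    = (pm * fx i%:Z - chi * pp * fx (i%:Z - n%:Z))
      + (pm * fy i%:Z - chi * pp * fy (i%:Z - n%:Z)) by ring.
  exact: dvdp_add.
- move=> c X /symbolE[fx fX fx_B].
  apply/symbolE; exists (fun m => c%:P * fx m) => [i j lt_in lt_jn | i lt_in].
    by rewrite blkZ fX // rmorphM /= horner_mx_C -mulmxE mul_scalar_mx.
  have [pp_x pm_x p_x] := fx_B i lt_in.
  split; try exact: dvdp_mull.
  have -> : pm * (c%:P * fx i%:Z) - chi * pp * (c%:P * fx (i%:Z - n%:Z))
    = c%:P * (pm * fx i%:Z - chi * pp * fx (i%:Z - n%:Z)) by ring.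
  exact: dvdp_mull.
move=> X Y /symbolE[fx fX fx_B] /symbolE[fy fY fy_B].
apply/symbolE; exists (symbol_mul n fx fy); last exact: frakB_symbol_mul.
exact/symbol_of_mul/(frakB_symbol_cross fx_B fy_B).
Qed.

Lemma symbol_of_exists n f : exists X : 'M[C]_(n * d.+1), symbol_of X f.
Proof.
have d_gt0 : (0 < d.+1)%N by [].
exists (\matrix_(r, c) horner_mx M (f ((r %/ d.+1)%N%:Z - (c %/ d.+1)%N%:Z))
                        (Ordinal (ltn_pmod r d_gt0)) (Ordinal (ltn_pmod c d_gt0))).
move=> i j lt_in lt_jn; apply/matrixP => k l.
have lt_r : (i * d.+1 + k < n * d.+1)%N by have := ltn_ord k; nia.
have lt_c : (j * d.+1 + l < n * d.+1)%N by have := ltn_ord l; nia.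
rewrite !mxE (mxget_ord _ (Ordinal lt_r) (Ordinal lt_c)) mxE /=.
rewrite !divnMDl // !divn_small // !addn0.
by congr (horner_mx M _ _ _); apply: val_inj; rewrite /= modnMDl modn_small.
Qed.

Lemma subalgebra_sub_frakB n (B : 'M[C]_(n * d.+1) -> Prop) A sp sm pp w a1 an gamma :
  (1 < n)%N -> subalgebra B -> (forall X, B X -> Tnd M X) ->
  gcd_coefs M B true sp -> gcd_coefs M B false sm -> B A ->
  tcoef A 1%:Z = horner_mx M sp * horner_mx M a1 ->
  tcoef A (1 - n%:Z) = horner_mx M sm * horner_mx M an ->
  p %| gamma * an - 1 -> w * pp = sp -> pp * sm %| p ->
  forall Y, B Y -> frakB M pp sm (a1 * gamma * w) Y.
Proof.
move=> lt_1n [_ _ _ B_mul] B_Tnd [_ [_ sp_coef] _] [_ [_ sm_coef] _] BA tA_1 tA_1n.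
move=> p_gamma eq_sp dvd_p Y BY.
have [fa fA] := (Tnd_symbolP A).1 (B_Tnd _ BA).
have [fy fY] := (Tnd_symbolP Y).1 (B_Tnd _ BY).
have cross := toeplitz_mul_cross fA fY (B_Tnd _ (B_mul _ _ BA BY)).1.
apply/(frakB_symbolP _ dvd_p fY) => i lt_in.
have sp_y : sp %| fy i%:Z.
  by apply: (sp_coef Y i _ BY lt_in); apply: tcoef_symbol fY _; lia.
have sm_y : sm %| fy (i%:Z - n%:Z).
  apply: (sm_coef Y (n - i)%N) => //; first lia.
  by rewrite (_ : - _ = i%:Z - n%:Z); [apply: tcoef_symbol fY _ | ]; lia.
have p_a1 : p %| fa 1%:Z - w * pp * a1.
  by apply/horner_mx_eqP; rewrite eq_sp rmorphM -tA_1 (tcoef_symbol fA) //; lia.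
have p_an : p %| fa (1 - n%:Z) - sm * an.
  by apply/horner_mx_eqP; rewrite rmorphM -tA_1n (tcoef_symbol fA) //; lia.
split=> //; first by apply: dvdp_trans sp_y; rewrite -eq_sp dvdp_mull.
(* [fa 1 = sp a1] and [fa (1-n) = sm an] modulo p, and [gamma] inverts [an] modulo p *)
have -> : sm * fy i%:Z - a1 * gamma * w * pp * fy (i%:Z - n%:Z) =
  - gamma * (fa 1%:Z * fy (i%:Z - n%:Z) - fa (1 - n%:Z) * fy i%:Z)
  + gamma * fy (i%:Z - n%:Z) * (fa 1%:Z - w * pp * a1)
  - gamma * fy i%:Z * (fa (1 - n%:Z) - sm * an)
  - sm * fy i%:Z * (gamma * an - 1) by ring.
have p_cross := cross 1%N i ltac:(lia) lt_in.
by apply: dvdp_sub; [apply: dvdp_sub; [apply: dvdp_add |] |]; apply: dvdp_mull.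
Qed.

Lemma maximal_frakB n (B : 'M[C]_(n * d.+1) -> Prop) pp pm chi :
  maximal_subalgebra M B -> pp * pm %| p ->
  (forall X, B X -> frakB M pp pm chi X) -> forall X, B X <-> frakB M pp pm chi X.
Proof.
move=> [_ _ B_max] dvd_p B_frakB X; split; first exact: B_frakB.
exact: B_max _ (frakB_subalgebra n chi dvd_p) (fun Y frakY => frakY.1) B_frakB X.
Qed.

(* With [gcdp sp (p %/ sm)] in place of [sp], [B] equals a [frakB] containing
   a matrix whose positive coefficients are all [p %/ sm]; [sp] divides them. *)
Lemma gcd_coefs_mul_dvdp n (B : 'M[C]_(n * d.+1) -> Prop) A sp sm a1 an gamma :
  (1 < n)%N -> maximal_subalgebra M B ->
  gcd_coefs M B true sp -> gcd_coefs M B false sm -> B A ->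
  tcoef A 1%:Z = horner_mx M sp * horner_mx M a1 ->
  tcoef A (1 - n%:Z) = horner_mx M sm * horner_mx M an ->
  p %| gamma * an - 1 -> sp * sm %| p.
Proof.
move=> lt_1n maxB sp_gcd sm_gcd BA tA_1 tA_1n p_gamma.
have [[subB B_Tnd _] [_ [sm_p _] _]] := (maxB, sm_gcd).
have [_ [_ sp_coef] _] := sp_gcd.
pose pp := gcdp sp (p %/ sm); pose q := p %/ (pp * sm).
have eq_sp : sp %/ pp * pp = sp by rewrite divpK ?dvdp_gcdl.
have dvd_p : pp * sm %| p.
  by rewrite -[X in _ %| X](divpK sm_p) dvdp_mul ?dvdp_gcdr.
have B_eq := maximal_frakB maxB dvd_p
  (subalgebra_sub_frakB lt_1n subB B_Tnd sp_gcd sm_gcd BA tA_1 tA_1n p_gamma eq_sp dvd_p).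
have [Z fZ] := symbol_of_exists n (fun m => if (0 < m)%R then pp * q else 0).
have BZ : B Z.
  apply/B_eq/(frakB_symbolP _ dvd_p fZ) => i lt_in.
  rewrite (_ : (0 < i%:Z)%R = true); last by apply/idP; lia.
  rewrite (_ : (0 < i%:Z - n%:Z)%R = false); last by apply/negbTE; lia.
  split; [exact: dvdp_mulr | exact: dvdp0 |]; rewrite !mulr0 subr0.
  by rewrite -[p](divpK dvd_p) -/q (_ : sm * (pp * q) = q * (pp * sm)) //; ring.
have sp_ppq : sp %| pp * q.
  by apply: (sp_coef Z 1%N _ BZ) => //; apply: tcoef_symbol fZ _; lia.
have -> : p = pp * q * sm by rewrite -[LHS](divpK dvd_p) -/q; ring.
exact: dvdp_mul.
Qed.

End ToeplitzSymbols.

Theorem corollary7p4 (C : numClosedFieldType) (n d : nat)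
  (M : 'M[C]_d.+1) (B : 'M[C]_(n * d.+1) -> Prop)
  (sp sm : {poly C}) (A : 'M[C]_(n * d.+1)) (at_ : int -> {poly C})
  (gamma1 : {poly C}) :
  (2 <= n)%N ->
  nonderogatory M ->
  maximal_subalgebra M B ->
  generic_subalg B ->
  gcd_coefs M B true sp ->
  gcd_coefs M B false sm ->
  B A ->
  (forall j : nat, (1 <= j < n)%N ->
     coprimep (at_ j%:Z) (mxminpoly M) /\
     tcoef A j%:Z = horner_mx M sp * horner_mx M (at_ j%:Z)) ->
  (forall j : nat, (1 <= j < n)%N ->
     coprimep (at_ (- j%:Z)) (mxminpoly M) /\
     tcoef A (- j%:Z) = horner_mx M sm * horner_mx M (at_ (- j%:Z))) ->
  mxminpoly M %| gamma1 * at_ (1 - n%:Z) - 1 ->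
  forall X, B X <-> frakB M sp sm (at_ 1 * gamma1) X.
Proof.
(* Nonderogatoriness, genericity and the coprimality of the [at_ j] only serve
   to guarantee that such [A] and [gamma1] exist. *)
move=> lt_1n _ maxB _ sp_gcd sm_gcd BA A_pos A_neg p_gamma.
have tA_1 := (A_pos 1%N lt_1n).2.
have tA_1n : tcoef A (1 - n%:Z) = horner_mx M sm * horner_mx M (at_ (1 - n%:Z)).
  by rewrite (_ : 1 - n%:Z = - (n - 1)%N%:Z); [apply: (A_neg _ _).2 | ]; lia.
have dvd_p := gcd_coefs_mul_dvdp lt_1n maxB sp_gcd sm_gcd BA tA_1 tA_1n p_gamma.
have [subB B_Tnd _] := maxB.
have B_frakB := subalgebra_sub_frakB lt_1n subB B_Tnd sp_gcd sm_gcd BA tA_1 tA_1n p_gamma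
  (mul1r sp) dvd_p.
by apply: maximal_frakB maxB dvd_p _ => X /B_frakB; rewrite mulr1.
Qed.
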